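(* Let $d$ and $p$ be integers with $d>p\ge 2$ and let \[ f_{d,p}(m)=\sum_{j=1}^{p}\binom{j+m-2}{j-1}\binom{d-j+m}{d-j}, \] a polynomial of degree $d-1$ in $m$. Let $\mathbf{V}(f_{d,p})=\{a\in\mathbb{C}: f_{d,p}(a)=0\}$. Then \[ \{-1,-2,\ldots,-(d-p)\}\subset \mathbf{V}(f_{d,p})\cap\mathbb{R}\subset[-(d-2),0). \]
   Context: For an integer $a\ge 0$, $\binom{a+x}{a}$ denotes the polynomial $\prod_{i=1}^{a}(x+i)/a!$ in $x$; so $\binom{j+m-2}{j-1}=\prod_{i=0}^{j-2}(m+i)/(j-1)!$ and $\binom{d-j+m}{d-j}=\prod_{i=1}^{d-j}(m+i)/(d-j)!$. *)

From mathcomp Require Import all_boot all_order all_algebra.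
Set Implicit Arguments. Unset Strict Implicit. Unset Printing Implicit Defensive.
Import Order.TTheory GRing.Theory Num.Theory.
Local Open Scope ring_scope.

(* binom_poly a b == the polynomial (prod_(i=b)^(b+a-1) (x + i)) / a!  in x.
   With b = 1 this is  binom(a + x, a)  as in the paper;
   with b = 0 and a = j-1 it is  binom(j + x - 2, j - 1). *)
Definition binom_poly (F : fieldType) (a b : nat) : {poly F} :=
  (a`!%:R)^-1 *: \prod_(b <= i < b + a) ('X + i%:R%:P).

Definition fdp (F : fieldType) (d p : nat) : {poly F} :=
  \sum_(1 <= j < p.+1) (binom_poly F (j - 1) 0 * binom_poly F (d - j) 1).

From mathcomp Require Import all_boot all_order all_algebra.
From mathcomp Require Import ring zify.
Import Order.TTheory GRing.Theory Num.Theory.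
Local Open Scope ring_scope.

(* The roots [-1, ..., -(d-p)] are common roots of the second binomial factor
   of every summand.  For real [a], the summands are all nonnegative when
   [a >= 0], the [j = 1] summand being positive.  When [a < -(d-2)], every
   summand with [j >= 2] has the sign [(-1)^(d-1)], and so has the sum of the
   first two summands, which factors as [binom(d-2+a, d-2) (d a + d - 1)/(d-1)];
   hence [f_{d,p}(a) <> 0] in both cases. *)

Lemma horner_binom_poly (F : fieldType) (a b : nat) (x : F) :
  (binom_poly F a b).[x] = (a`!%:R)^-1 * \prod_(b <= i < b + a) (x + i%:R).
Proof.
rewrite /binom_poly hornerZ horner_prod; congr (_ * _).
by apply: eq_bigr => i _; rewrite hornerD hornerX hornerC.
Qed.

Lemma horner_binom_poly0 (F : fieldType) (b : nat) (x : F) :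
  (binom_poly F 0 b).[x] = 1.
Proof. by rewrite horner_binom_poly addn0 big_geq // invr1 mul1r. Qed.

Lemma horner_fdp (F : fieldType) (d p : nat) (x : F) :
  (fdp F d p).[x] =
  \sum_(1 <= j < p.+1) (binom_poly F (j - 1) 0).[x] * (binom_poly F (d - j) 1).[x].
Proof. by rewrite /fdp horner_sum; apply: eq_bigr => j _; rewrite hornerM. Qed.

Lemma binom_poly_root (F : fieldType) (a b k : nat) :
  (b <= k < b + a)%N -> root (binom_poly F a b) (- k%:R).
Proof.
move=> kab; apply/rootP; rewrite horner_binom_poly (bigD1_seq k) /=.
- by rewrite addNr mul0r mulr0.
- by rewrite mem_index_iota.
- exact: iota_uniq.
Qed.

Lemma fdp_root_neg (F : fieldType) (d p k : nat) :
  (1 <= k <= d - p)%N -> root (fdp F d p) (- k%:R).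
Proof.
move=> /andP[k_gt0 k_le]; apply/rootP; rewrite horner_fdp big_nat big1 // => j.
move=> /andP[_ j_le]; rewrite (rootP (@binom_poly_root _ (d - j) 1 k _)) ?mulr0 //.
by rewrite k_gt0 /=; lia.
Qed.

Section Signs.
Variable R : numFieldType.

Lemma binom_poly_ge0 (a b : nat) (x : R) :
  - b%:R <= x -> 0 <= (binom_poly R a b).[x].
Proof.
move=> xb; rewrite horner_binom_poly mulr_ge0 ?invr_ge0 ?ler0n //.
rewrite big_nat; apply: prodr_ge0 => i /andP[bi _].
by rewrite -lerBlDr sub0r (le_trans _ xb) // lerN2 ler_nat.
Qed.

Lemma binom_poly_gt0 (a b : nat) (x : R) :
  - b%:R < x -> 0 < (binom_poly R a b).[x].
Proof.
move=> xb; rewrite horner_binom_poly mulr_gt0 ?invr_gt0 ?ltr0n ?fact_gt0 //.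
rewrite big_nat; apply: prodr_gt0 => i /andP[bi _].
by rewrite -ltrBlDr sub0r (le_lt_trans _ xb) // lerN2 ler_nat.
Qed.

Lemma binom_poly_sign (a b m : nat) (x : R) :
  x < - m%:R -> (b + a <= m.+1)%N -> 0 < (-1) ^+ a * (binom_poly R a b).[x].
Proof.
move=> xm abm; rewrite horner_binom_poly mulrCA mulr_gt0 ?invr_gt0 ?ltr0n ?fact_gt0 //.
rewrite -[in (-1) ^+ a](addKn b a) -prodr_const_nat -big_split /=.
rewrite big_nat; apply: prodr_gt0 => i /andP[_ iab].
rewrite mulN1r oppr_gt0 -ltrBrDr sub0r (lt_le_trans xm) // lerN2 ler_nat.
by rewrite -ltnS (leq_trans iab).
Qed.

Lemma fdp_gt0 (d p : nat) (x : R) :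
  (0 < p)%N -> 0 <= x -> 0 < (fdp R d p).[x].
Proof.
move=> p_gt0 x_ge0; have x_gtN1 : - 1%:R < x by rewrite (lt_le_trans _ x_ge0) ?oppr_lt0.
rewrite horner_fdp big_ltn ?ltnS // subnn horner_binom_poly0 mul1r.
apply: ltr_wpDr; last exact: binom_poly_gt0.
by apply: sumr_ge0 => j _; rewrite mulr_ge0 ?binom_poly_ge0 ?oppr0 ?(ltW x_gtN1).
Qed.

Lemma fdp_summand_sign (d j : nat) (x : R) :
  (2 <= j < d)%N -> x < - (d - 2)%:R ->
  0 < (-1) ^+ d.-1 * ((binom_poly R (j - 1) 0).[x] * (binom_poly R (d - j) 1).[x]).
Proof.
move=> /andP[j_ge2 j_lt] xd.
have -> : d.-1 = (j - 1 + (d - j))%N by lia.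
rewrite exprD mulrACA; apply: mulr_gt0; apply: (binom_poly_sign _ _ _ _ xd); lia.
Qed.

Lemma horner_fdp2 (n : nat) (x : R) :
  (fdp R n.+2 2).[x] =
  (binom_poly R n 1).[x] * (n.+2%:R * x + n.+1%:R) / n.+1%:R.
Proof.
rewrite horner_fdp big_ltn // big_ltn // big_geq // addr0 subnn !subn1 subn2 /=.
rewrite horner_binom_poly0 mul1r !horner_binom_poly add0n big_nat1.
rewrite addnS big_nat_recr ?leq_addr //= factS natrM invfM.
rewrite (_ : 1`! = 1)%N // invr1 mul1r addr0 add1n.
have nf_neq0 : n`!%:R != 0 :> R by rewrite pnatr_eq0 -lt0n fact_gt0.
by field; rewrite nf_neq0 andbT addrC natr1 pnatr_eq0.
Qed.

Lemma fdp_sign_below (d p : nat) (x : R) :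
  (2 <= p)%N -> (p < d)%N -> x < - (d - 2)%:R ->
  0 < (-1) ^+ d.-1 * (fdp R d p).[x].
Proof.
move=> p_ge2 p_lt xd.
have [n d_eq] : exists n, d = n.+3 by exists (d - 3)%N; lia.
subst d; rewrite subn2 /= in xd.
rewrite /fdp (big_cat_nat _ (n := 3)) //= hornerD -/(fdp R n.+3 2) horner_fdp2.
rewrite horner_sum mulrDr mulr_sumr; apply: ltr_wpDr.
  rewrite big_nat; apply: sumr_ge0 => j /andP[j_ge3 j_le].
  rewrite hornerM; apply/ltW/(@fdp_summand_sign n.+3) => //; lia.
have head_neg : n.+3%:R * x + n.+2%:R < 0.
  have -> : n.+3%:R * x + n.+2%:R = n.+3%:R * (x + n.+1%:R) - (n * n + 3 * n + 1)%:R :> R.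
    by rewrite !natrD !natrM; ring.
  rewrite subr_lt0 (lt_le_trans _ (ler0n _ _)) // pmulr_rlt0 ?ltr0n //.
  by rewrite -ltrBrDr sub0r.
rewrite (_ : (-1) ^+ n.+2 * _ = (-1) ^+ n.+1 * (binom_poly R n.+1 1).[x]
                            * - (n.+3%:R * x + n.+2%:R) / n.+2%:R); last first.
  by rewrite exprS; ring.
rewrite mulr_gt0 ?invr_gt0 ?ltr0n // mulr_gt0 ?oppr_gt0 //.
exact: (binom_poly_sign _ _ _ _ xd).
Qed.

End Signs.

Theorem theorem2p5 (C : numClosedFieldType) (d p : nat) :
  (2 <= p)%N -> (p < d)%N ->
  (forall k : nat, (1 <= k <= d - p)%N -> root (fdp C d p) (- k%:R)) /\
  (forall a : C, a \is Num.real -> root (fdp C d p) a ->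
     - (d - 2)%:R <= a /\ a < 0).
Proof.
move=> p_ge2 p_lt; split=> [k|a a_real /rootP fa0]; first exact: fdp_root_neg.
split; last first.
  rewrite real_ltNge ?real0 //; apply/negP => a_ge0.
  by have := @fdp_gt0 C d p a (ltnW p_ge2) a_ge0; rewrite fa0 ltxx.
rewrite real_leNgt ?rpredN ?realn //; apply/negP => a_lt.
have := @fdp_sign_below C d p a p_ge2 p_lt a_lt.
by rewrite fa0 mulr0 ltxx.
Qed.
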